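(* Let $A$ be a finite nonempty set. (a) For every $M\subseteq A^A$: $(\overline{M})^{*}=\mathrm{Pol}\,\mathrm{gQuord}\,M$. (b) For a monoid $M\le A^A$ the following are equivalent: (i) $M$ is u-closed; (i)$'$ $M^{*}$ is a clone; (i)$''$ $\Gamma_M\in\mathrm{gQuord}(A)$; (ii) $M=\mathrm{End}\,Q$ for some $Q\subseteq\mathrm{gQuord}(A)$; (iii) $M^{*}=\mathrm{Pol}\,Q$ for some $Q\subseteq\mathrm{gQuord}(A)$; moreover the same $Q$ can be taken in (ii) and (iii). (c) For $Q\subseteq\mathrm{Rel}(A)$ the following are equivalent: (i) $\mathrm{End}\,Q$ is u-closed; (i)$'$ $(\mathrm{End}\,Q)^{*}$ is a clone; (i)$''$ $\Gamma_{\mathrm{End}\,Q}\in\mathrm{gQuord}(A)$; (ii) there is $Q'\subseteq\mathrm{gQuord}(A)$ with $\mathrm{End}\,Q=\mathrm{End}\,Q'$; (ii)$'$ there is $Q'\subseteq\mathrm{gQuord}(A)$ with $[Q]_{\exists,\wedge,\vee,=}=[Q']_{\exists,\wedge,\vee,=}$; (iii) there is $Q'\subseteq\mathrm{gQuord}(A)$ with $(\mathrm{End}\,Q)^{*}=\mathrm{Pol}\,Q'$; moreover the same $Q'$ can be taken in (ii) and (iii), and instead of ''there is $Q'\subseteq\mathrm{gQuord}(A)$'' one may take ''there is $\rho\in\mathrm{gQuord}(A)$'' with $Q'=\{\rho\}$.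
   Context: $\mathrm{Rel}(A)$ is the set of all finitary relations on $A$. An operation preserves a relation if componentwise application to tuples of the relation gives a tuple of the relation; $\mathrm{Pol}\,Q$ (resp. $\mathrm{End}\,Q$) is the set of all finitary operations (resp. unary maps) preserving all relations of $Q$. A relation $\rho\subseteq A^m$ is a generalized quasiorder if it is reflexive and for every $m\times m$-matrix over $A$ whose rows and columns all belong to $\rho$, the diagonal belongs to $\rho$; $\mathrm{gQuord}(A)$ is the set of all of them, and for $M\subseteq A^A$, $\mathrm{gQuord}\,M$ is the set of those preserved by all maps in $M$. Writing $A=\{a_1,\dots,a_k\}$, $\Gamma_M:=\{(g a_1,\dots,g a_k)\mid g\in M\}$. A translation of an $n$-ary $f$ is a unary map $x\mapsto f(b_1,\dots,b_{i-1},x,b_{i+1},\dots,b_n)$ with fixed $b_j$; $\mathrm{trl}(f)$ is the set of translations ($\{f\}$ for unary $f$); $N^*:=\{f\mid\mathrm{trl}(f)\subseteq N\}$. The u-closure $\overline M$ is the intersection of all monoids $N$ with $M\subseteq N\le A^A$ such that $N^*$ is a clone; $M$ is u-closed if $\overline M=M$. $[Q]_{\exists,\wedge,\vee,=}$ denotes the set of all relations definable from relations in $Q$ by positive formulas (formulas built from relation symbols of $Q$ and equality using only $\exists,\wedge,\vee$). *)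

From mathcomp Require Import all_boot.
From mathcomp Require Import boolp.
Set Implicit Arguments.
Unset Strict Implicit.
Unset Printing Implicit Defensive.

Section GQuord.
Variable A : finType.

Definition umap := {ffun A -> A}.
Definition idumap : umap := [ffun x => x].
Definition compmap (g h : umap) : umap := [ffun x => g (h x)].

(* (n.+1)-ary operations: operations have arity >= 1 *)
Definition op (n : nat) := {ffun {ffun 'I_n.+1 -> A} -> A}.
Definition opset := forall n : nat, op n -> Prop.
Definition opeq (C1 C2 : opset) := forall n (f : op n), C1 n f <-> C2 n f.

Definition relation (m : nat) := {set {ffun 'I_m -> A}}.
Definition relset := {m : nat & relation m} -> Prop.
Definition releq (Q1 Q2 : relset) := forall s, Q1 s <-> Q2 s.
Definition single (m : nat) (rho : relation m) : relset :=
  fun s => s = existT _ m rho.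

Definition preserves (n m : nat) (f : op n) (rho : relation m) : Prop :=
  forall R : 'I_n.+1 -> {ffun 'I_m -> A},
    (forall j, R j \in rho) -> [ffun i => f [ffun j => R j i]] \in rho.
Definition preserves1 (m : nat) (g : umap) (rho : relation m) : Prop :=
  forall r, r \in rho -> [ffun i => g (r i)] \in rho.

Definition Pol (Q : relset) : opset :=
  fun n f => forall s, Q s -> preserves f (projT2 s).
Definition End (Q : relset) : {set umap} :=
  [set g | `[< forall s, Q s -> preserves1 g (projT2 s) >]].

Definition is_gquord (m : nat) (rho : relation m) : Prop :=
  (forall a : A, [ffun _ : 'I_m => a] \in rho) /\
  (forall X : 'I_m -> 'I_m -> A,
     (forall i, [ffun j => X i j] \in rho) ->
     (forall j, [ffun i => X i j] \in rho) ->
     [ffun i => X i i] \in rho).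
Definition gQuord : relset := fun s => is_gquord (projT2 s).
Definition subrelset (Q1 Q2 : relset) := forall s, Q1 s -> Q2 s.
Definition gQuord_of (M : {set umap}) : relset :=
  fun s => is_gquord (projT2 s) /\ forall g, g \in M -> preserves1 g (projT2 s).

(* Gamma_M, using the enumeration a_1,...,a_k of A given by enum_val *)
Definition Gamma (M : {set umap}) : relation #|A| :=
  [set [ffun i : 'I_#|A| => g (enum_val i)] | g : umap in M].

Definition proj (n : nat) (i : 'I_n.+1) : op n := [ffun x : {ffun 'I_n.+1 -> A} => x i].
Definition compop (n k : nat) (f : op n) (gs : 'I_n.+1 -> op k) : op k :=
  [ffun x : {ffun 'I_k.+1 -> A} => f [ffun i => gs i x]].
Definition is_clone (C : opset) : Prop :=
  (forall n (i : 'I_n.+1), C n (proj i)) /\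
  (forall n k (f : op n) (gs : 'I_n.+1 -> op k),
     C n f -> (forall i, C k (gs i)) -> C k (compop f gs)).
Definition translation (n : nat) (f : op n) (i : 'I_n.+1)
  (b : {ffun 'I_n.+1 -> A}) : umap :=
  [ffun x : A => f [ffun j => if j == i then x else b j]].
(* N^* : all operations all of whose translations lie in N
   (for unary f, the translations are exactly f itself) *)
Definition star (N : {set umap}) : opset :=
  fun n f => forall i b, translation f i b \in N.

Definition is_monoid (M : {set umap}) : Prop :=
  idumap \in M /\ forall g h, g \in M -> h \in M -> compmap g h \in M.

Definition ubar (M : {set umap}) : {set umap} :=
  [set g | `[< forall N : {set umap}, is_monoid N -> M \subset N ->
                 is_clone (star N) -> g \in N >]].
Definition u_closed (M : {set umap}) : Prop := ubar M = M.

Inductive pform : Type :=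
| PAtom (m : nat) (rho : relation m) (v : 'I_m -> nat)
| PEq (i j : nat)
| PAnd (p q : pform)
| POr (p q : pform)
| PEx (i : nat) (p : pform)
| PFalse. (* empty disjunction *)

Fixpoint over (Q : relset) (p : pform) : Prop :=
  match p with
  | PAtom m rho _ => Q (existT _ m rho)
  | PEq _ _ => True
  | PAnd p q | POr p q => over Q p /\ over Q q
  | PEx _ p => over Q p
  | PFalse => True
  end.

Fixpoint sat (e : nat -> A) (p : pform) : Prop :=
  match p with
  | PAtom m rho v => [ffun i => e (v i)] \in rho
  | PEq i j => e i = e j
  | PAnd p q => sat e p /\ sat e q
  | POr p q => sat e p \/ sat e q
  | PEx i p => exists a : A, sat (fun k => if k == i then a else e k) p
  | PFalse => False
  end.

(* [Q]_{exists,/\,\/,=}: the m-ary relations defined by a positive formula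
   over Q whose free variables are among x_0,...,x_{m-1} *)
Definition pdefinable (Q : relset) : relset :=
  fun s => exists p, over Q p /\
    forall e : nat -> A,
      ([ffun i : 'I_(projT1 s) => e (nat_of_ord i)] \in projT2 s) <-> sat e p.

End GQuord.

From Pilot Require Import Defs.
From mathcomp Require Import all_boot.
From mathcomp Require Import boolp.
Set Implicit Arguments. Unset Strict Implicit. Unset Printing Implicit Defensive.

(* For a generalized quasiorder [rho], an operation preserves [rho] as soon as
   all its translations do: the arguments are replaced by the given tuples one
   at a time, each step being an instance of the diagonal property. Hence
   (End Q)^* = Pol Q is a clone whenever Q consists of generalized quasiorders.
   Conversely, if N^* is a clone then Gamma_N is a generalized quasiorder
   (constant maps give reflexivity, and a binary operation whose translations
   are the rows and columns of a matrix gives the diagonal property), and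
   End {Gamma_N} = N for a monoid N. Together these give ubar M = End gQuord M
   and every characterization of u-closed monoids, with Gamma_M as a single
   witness. For (c), on a finite set the relations positively definable from Q
   are exactly those preserved by End Q, so the positive closures of Q and Q'
   agree iff End Q = End Q'. *)

Section GeneralizedQuasiorders.
Variable A : finType.
Implicit Types (M N : {set umap A}) (Q : relset A) (g h : umap A).

Lemma in_End Q g : g \in End Q <-> forall s, Q s -> preserves1 g (projT2 s).
Proof. by rewrite inE; split=> /asboolP. Qed.

Lemma in_ubar M g : g \in ubar M <->
  forall N, is_monoid N -> M \subset N -> is_clone (star N) -> g \in N.
Proof. by rewrite inE; split=> /asboolP. Qed.

Lemma End_single m (rho : relation A m) g : g \in End (single rho) <-> preserves1 g rho.
Proof. by rewrite in_End; split=> [/(_ _ erefl) | gP _ ->]. Qed.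

Lemma single_gQuord m (rho : relation A m) :
  is_gquord rho -> subrelset (single rho) (@gQuord A).
Proof. by move=> rhoQ s ->. Qed.

Lemma gquord_const m (rho : relation A m) (t : {ffun 'I_m -> A}) :
  is_gquord rho -> (forall i i', t i = t i') -> t \in rho.
Proof.
case: m rho t => [|m] rho t [rho_refl rho_diag] t_const.
  by have := rho_diag (fun i _ => t i); rewrite /= ffunK; apply => -[].
by have -> : t = [ffun=> t ord0] by apply/ffunP => i; rewrite ffunE (t_const i ord0).
Qed.

Section Translations.
Variables (m n : nat) (rho : relation A m) (f : op A n).
Hypothesis rhoQ : is_gquord rho.

Lemma translation_preserves i b : preserves f rho -> preserves1 (translation f i b) rho.
Proof.
move=> fP r r_rho.
have -> : [ffun l => translation f i b (r l)] =
          [ffun l => f [ffun j => (if j == i then r else [ffun=> b j]) l]].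
  apply/ffunP => l; rewrite !ffunE; congr (f _); apply/ffunP => j.
  by rewrite !ffunE; case: (j == i); rewrite ?ffunE.
by apply: fP => j; case: (j == i) => //; apply: gquord_const => // ? ?; rewrite !ffunE.
Qed.

Lemma translations_preserve_partly_const :
  (forall i b, preserves1 (translation f i b) rho) ->
  forall k (S : 'I_n.+1 -> {ffun 'I_m -> A}), (forall j, S j \in rho) ->
    (forall j : 'I_n.+1, k <= j -> forall l l', S j l = S j l') ->
  [ffun l => f [ffun j => S j l]] \in rho.
Proof.
move=> transP; elim=> [|k IHk] S S_rho S_const.
  apply: gquord_const => // l l'.
  by rewrite !ffunE; congr (f _); apply/ffunP => j; rewrite !ffunE (S_const j _ l l').
have [k_lt | k_ge] := ltnP k n.+1; last first.
  by apply: IHk => // j /(leq_trans k_ge); rewrite leqNgt ltn_ord.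
pose ko := Ordinal k_lt.
(* The rows of [X] are covered by the induction hypothesis, its columns are
   images under a translation, and its diagonal is the goal. *)
pose X p q := f [ffun j => if j == ko then S ko p else S j q].
have -> : [ffun l => f [ffun j => S j l]] = [ffun l => X l l].
  apply/ffunP => l; rewrite !ffunE; congr (f _); apply/ffunP => j.
  by rewrite !ffunE; case: eqP => [->|].
apply: (proj2 rhoQ X) => [p | q].
  have -> : [ffun q => X p q] =
            [ffun q => f [ffun j => (if j == ko then [ffun=> S ko p] else S j) q]].
    apply/ffunP => q; rewrite !ffunE; congr (f _); apply/ffunP => j.
    by rewrite !ffunE; case: (j == ko); rewrite ?ffunE.
  apply: IHk => [j | j k_le_j l l']; case: eqP => [_ | /eqP j_neq_k].
  - by apply: gquord_const => // ? ?; rewrite !ffunE.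
  - exact: S_rho.
  - by rewrite !ffunE.
  - apply: S_const; rewrite ltn_neqAle k_le_j andbT.
    by apply: contra j_neq_k => /eqP k_j; apply/eqP/val_inj.
have := transP ko [ffun j => S j q] (S ko) (S_rho ko).
congr (_ \in rho); apply/ffunP => p; rewrite !ffunE; congr (f _); apply/ffunP => j.
by rewrite !ffunE; case: (j == ko); rewrite ?ffunE.
Qed.

Lemma preserves_translations :
  preserves f rho <-> forall i b, preserves1 (translation f i b) rho.
Proof.
split=> [fP i b | transP R R_rho]; first exact: translation_preserves.
apply: (translations_preserve_partly_const transP (k := n.+1)) => // j.
by rewrite leqNgt ltn_ord.
Qed.

End Translations.

Lemma star_End Q : subrelset Q (@gQuord A) -> opeq (star (End Q)) (Pol Q).
Proof.
move=> QgQ n f; split=> [fT s Qs | fP i b].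
  by apply/(preserves_translations _ (QgQ _ Qs)) => i b; have /in_End := fT i b; apply.
by apply/in_End => s Qs; have /(preserves_translations _ (QgQ _ Qs)) := fP s Qs; apply.
Qed.

Lemma Pol_clone Q : is_clone (Pol Q).
Proof.
split=> [n i s _ R R_rho | n k f gs fP gsP s Qs R R_rho].
  by have -> : [ffun l => proj A i [ffun j => R j l]] = R i
    by apply/ffunP => l; rewrite !ffunE.
have := fP s Qs (fun l => [ffun i => gs l [ffun j => R j i]]) (fun l => gsP l s Qs R R_rho).
congr (_ \in projT2 s); apply/ffunP => l; rewrite !ffunE; congr (f _).
by apply/ffunP => j; rewrite !ffunE.
Qed.

Lemma clone_opeq (C1 C2 : opset A) : opeq C1 C2 -> is_clone C2 -> is_clone C1.
Proof.
move=> C12 [C2_proj C2_comp]; split=> [n i | n k f gs fC1 gsC1]; apply/C12.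
  exact: C2_proj.
by apply: C2_comp => [|i]; apply/C12.
Qed.

Lemma End_gQuord_clone Q : subrelset Q (@gQuord A) -> is_clone (star (End Q)).
Proof. by move=> QgQ; apply: clone_opeq (star_End QgQ) (Pol_clone Q). Qed.

Lemma End_monoid Q : is_monoid (End Q).
Proof.
split=> [|g h /in_End gP /in_End hP]; apply/in_End => s Qs r r_rho.
  by have -> : [ffun i => idumap A (r i)] = r by apply/ffunP => i; rewrite !ffunE.
have := gP s Qs _ (hP s Qs r r_rho).
by congr (_ \in projT2 s); apply/ffunP => i; rewrite !ffunE.
Qed.

Definition gamma (g : umap A) : {ffun 'I_#|A| -> A} := [ffun i => g (enum_val i)].

Lemma gamma_inj : injective gamma.
Proof.
move=> g h /ffunP gh; apply/ffunP => a.
by have := gh (enum_rank a); rewrite !ffunE enum_rankK.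
Qed.

Lemma mem_Gamma M g : (gamma g \in Gamma M) = (g \in M).
Proof. exact: mem_imset gamma_inj. Qed.

Lemma gamma_comp g h : [ffun i => g (gamma h i)] = gamma (compmap g h).
Proof. by apply/ffunP => i; rewrite !ffunE. Qed.

Lemma preserves_Gamma_mem M g : idumap A \in M -> preserves1 g (Gamma M) -> g \in M.
Proof.
move=> idM /(_ _ (imset_f gamma idM)); rewrite gamma_comp mem_Gamma.
by have -> : compmap g (idumap A) = g by apply/ffunP => a; rewrite !ffunE.
Qed.

Lemma End_Gamma M : is_monoid M -> End (single (Gamma M)) = M.
Proof.
move=> [idM compM]; apply/setP => g; apply/idP/idP => [/End_single | gM].
  exact: preserves_Gamma_mem.
by apply/End_single => _ /imsetP[h hM ->]; rewrite gamma_comp mem_Gamma compM.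
Qed.

Section GammaOfClone.
Variables (a0 : A) (N : {set umap A}).
Hypothesis starN_clone : is_clone (star N).

(* The constant maps are the translations of a binary projection. *)
Lemma clone_Gamma_refl a : [ffun=> a] \in Gamma N.
Proof.
have := proj1 starN_clone 1 ord_max ord0 [ffun=> a]; rewrite -mem_Gamma.
by congr (_ \in Gamma N); apply/ffunP => i; rewrite !ffunE.
Qed.

(* The translations of [(x, y) |-> X x y] are the rows and columns of [X],
   and the diagonal is a translation of its composite with two projections. *)
Lemma clone_Gamma_diag (X : 'I_#|A| -> 'I_#|A| -> A) :
  (forall i, [ffun j => X i j] \in Gamma N) ->
  (forall j, [ffun i => X i j] \in Gamma N) -> [ffun i => X i i] \in Gamma N.
Proof.
move=> X_rows X_cols.
pose f : op A 1 :=
  [ffun x : {ffun 'I_2 -> A} => X (enum_rank (x ord0)) (enum_rank (x ord_max))].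
have fN : star N f.
  move=> i b; rewrite -mem_Gamma.
  have [-> | ->] : i = ord0 \/ i = ord_max.
    by case: i => -[|[|//]] ?; [left | right]; apply/val_inj.
  - have := X_cols (enum_rank (b ord_max)).
    by congr (_ \in Gamma N); apply/ffunP => j; rewrite !ffunE /= enum_valK.
  - have := X_rows (enum_rank (b ord0)).
    by congr (_ \in Gamma N); apply/ffunP => j; rewrite !ffunE /= enum_valK.
have := proj2 starN_clone 1 0 f (fun=> proj A ord0) fN (fun=> proj1 starN_clone 0 ord0).
move=> /(_ ord0 [ffun=> a0]); rewrite -mem_Gamma.
by congr (_ \in Gamma N); apply/ffunP => i; rewrite !ffunE /= enum_valK.
Qed.

Lemma clone_Gamma_gquord : is_gquord (Gamma N).
Proof. by split; [exact: clone_Gamma_refl | exact: clone_Gamma_diag]. Qed.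

End GammaOfClone.

Lemma gQuord_of_sub M : subrelset (gQuord_of M) (@gQuord A).
Proof. by move=> s []. Qed.

Lemma ubarE (a0 : A) M : ubar M = End (gQuord_of M).
Proof.
apply/setP => g; apply/idP/idP => [/in_ubar | /in_End gP].
  apply; [exact: End_monoid | | exact: End_gQuord_clone (@gQuord_of_sub M)].
  by apply/subsetP => h hM; apply/in_End => s [_]; apply.
apply/in_ubar => N N_monoid /subsetP MN starN_clone.
apply: preserves_Gamma_mem; first exact: N_monoid.1.
apply: (gP (existT _ _ (Gamma N))); split; first exact: clone_Gamma_gquord.
by move=> h /MN hN; apply/End_single; rewrite End_Gamma.
Qed.

Lemma star_ubar (a0 : A) M : opeq (star (ubar M)) (Pol (gQuord_of M)).
Proof. by rewrite (ubarE a0); apply: star_End; exact: gQuord_of_sub. Qed.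

Section UClosedMonoid.
Variables (a0 : A) (M : {set umap A}).
Hypothesis M_monoid : is_monoid M.

Lemma u_closed_clone : u_closed M <-> is_clone (star M).
Proof.
split=> [<- | starM_clone].
  exact: clone_opeq (star_ubar a0 M) (Pol_clone _).
apply/eqP; rewrite eqEsubset; apply/andP; split; apply/subsetP => g.
  by move/in_ubar/(_ M M_monoid (subxx _) starM_clone).
by move=> gM; apply/in_ubar => N _ /subsetP MN _; exact: MN.
Qed.

Lemma u_closed_Gamma : u_closed M <-> is_gquord (Gamma M).
Proof.
split=> [/u_closed_clone | GammaQ]; first exact: clone_Gamma_gquord.
apply/u_closed_clone; rewrite -(End_Gamma M_monoid).
exact/End_gQuord_clone/single_gQuord.
Qed.

Lemma u_closed_End_Gamma : u_closed M ->
  [/\ is_gquord (Gamma M), M = End (single (Gamma M))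
    & opeq (star M) (Pol (single (Gamma M)))].
Proof.
move=> /u_closed_Gamma GammaQ; split; rewrite ?End_Gamma //.
by rewrite -{1}(End_Gamma M_monoid); apply/star_End/single_gQuord.
Qed.

Lemma Pol_u_closed Q : opeq (star M) (Pol Q) -> u_closed M.
Proof. by move=> starM_Pol; apply/u_closed_clone/(clone_opeq starM_Pol)/Pol_clone. Qed.

Lemma End_gQuord_u_closed Q : subrelset Q (@gQuord A) -> M = End Q -> u_closed M.
Proof. by move=> QgQ M_End; apply/u_closed_clone; rewrite M_End; apply: End_gQuord_clone. Qed.

Lemma u_closed_End :
  u_closed M <-> exists Q, subrelset Q (@gQuord A) /\ M = End Q.
Proof.
split=> [/u_closed_End_Gamma[GammaQ M_End _] | [Q [/End_gQuord_u_closed]]] //.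
by exists (single (Gamma M)); split=> //; exact: single_gQuord.
Qed.

Lemma u_closed_Pol :
  u_closed M <-> exists Q, subrelset Q (@gQuord A) /\ opeq (star M) (Pol Q).
Proof.
split=> [/u_closed_End_Gamma[GammaQ _ starM_Pol] | [Q [_ /Pol_u_closed]]] //.
by exists (single (Gamma M)); split=> //; exact: single_gQuord.
Qed.

Lemma u_closed_End_Pol : u_closed M <->
  exists Q, subrelset Q (@gQuord A) /\ M = End Q /\ opeq (star M) (Pol Q).
Proof.
split=> [/u_closed_End_Gamma[GammaQ M_End starM_Pol] | [Q [_ [_ /Pol_u_closed]]]] //.
by exists (single (Gamma M)); split=> //; exact: single_gQuord.
Qed.

Lemma u_closed_End_single : u_closed M <->
  exists m (rho : relation A m), is_gquord rho /\ M = End (single rho).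
Proof.
split=> [/u_closed_End_Gamma[GammaQ M_End _] | [m [rho [/single_gQuord]]]].
  by exists #|A|, (Gamma M).
exact: End_gQuord_u_closed.
Qed.

Lemma u_closed_Pol_single : u_closed M <->
  exists m (rho : relation A m), is_gquord rho /\ opeq (star M) (Pol (single rho)).
Proof.
split=> [/u_closed_End_Gamma[GammaQ _ starM_Pol] | [m [rho [_ /Pol_u_closed]]]] //.
by exists #|A|, (Gamma M).
Qed.

Lemma u_closed_End_Pol_single : u_closed M <-> exists m (rho : relation A m),
  is_gquord rho /\ M = End (single rho) /\ opeq (star M) (Pol (single rho)).
Proof.
split=> [/u_closed_End_Gamma[GammaQ M_End starM_Pol] | [m [rho [_ [_ /Pol_u_closed]]]]] //.
by exists #|A|, (Gamma M).
Qed.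

End UClosedMonoid.

Section PositiveDefinability.
Variable a0 : A.

Lemma eq_sat (p : pform A) (e e' : nat -> A) : e =1 e' -> sat e p -> sat e' p.
Proof.
elim: p e e' => [m rho v|i j|p IHp q IHq|p IHp q IHq|i p IHp|] e e' ee' //=.
- by congr (_ \in rho); apply/ffunP => k; rewrite !ffunE ee'.
- by rewrite !ee'.
- by case=> /(IHp _ _ ee') ? /(IHq _ _ ee').
- by case=> [/(IHp _ _ ee') | /(IHq _ _ ee')]; [left | right].
- case=> a /IHp sat_a; exists a; apply: sat_a => k.
  by case: (k == i).
Qed.

Lemma sat_End Q (p : pform A) g e :
  Defs.over Q p -> g \in End Q -> sat e p -> sat (g \o e) p.
Proof.
move=> + /in_End gP; elim: p e => [m rho v|i j|p IHp q IHq|p IHp q IHq|i p IHp|] e //=.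
- move=> Qrho /(gP _ Qrho).
  by congr (_ \in rho); apply/ffunP => k; rewrite !ffunE.
- by move=> _ ->.
- by case=> Qp Qq [/(IHp _ Qp) ? /(IHq _ Qq)].
- by case=> Qp Qq [/(IHp _ Qp) | /(IHq _ Qq)]; [left | right].
- move=> Qp [a /(IHp _ Qp) sat_ga]; exists (g a); apply: eq_sat sat_ga => k /=.
  by case: (k == i).
Qed.

Lemma pdefinable_preserved Q s g : pdefinable Q s -> g \in End Q -> preserves1 g (projT2 s).
Proof.
case: s => m rho [p [Qp p_def]] gQ r r_rho /=.
pose e k := if insub k is Some i then r i else a0.
have e_r : [ffun i : 'I_m => e i] = r by apply/ffunP => i; rewrite ffunE /e valK.
move: r_rho; rewrite -e_r => /p_def /(sat_End Qp gQ) /p_def.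
by congr (_ \in rho); apply/ffunP => i; rewrite !ffunE.
Qed.

Definition PTrue : pform A := PEq A 0 0.
Definition bigPAnd (T : Type) (s : seq T) (F : T -> pform A) :=
  foldr (fun x => PAnd (F x)) PTrue s.
Definition bigPOr (T : Type) (s : seq T) (F : T -> pform A) :=
  foldr (fun x => POr (F x)) (PFalse A) s.
Definition PExs (vs : seq nat) (p : pform A) := foldr (@PEx A) p vs.

Lemma sat_bigPAnd (T : eqType) (s : seq T) F e :
  sat e (bigPAnd s F) <-> forall x, x \in s -> sat e (F x).
Proof.
elim: s => [|x s IHs] /=; first by split.
rewrite IHs; split=> [[Fx Fs] y | Fs].
  by rewrite inE => /orP[/eqP-> | /Fs].
by split=> [|y ys]; apply: Fs; rewrite inE ?ys ?eqxx ?orbT.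
Qed.

Lemma sat_bigPOr (T : eqType) (s : seq T) F e :
  sat e (bigPOr s F) <-> exists2 x, x \in s & sat e (F x).
Proof.
elim: s => [|x s IHs] /=; first by split=> // -[].
rewrite IHs; split=> [[Fx | [y ys Fy]] | [y]]; first by exists x; rewrite ?inE ?eqxx.
  by exists y; rewrite // inE ys orbT.
by rewrite inE => /orP[/eqP-> | ys Fy]; [left | right; exists y].
Qed.

Lemma sat_PExs vs p e : sat e (PExs vs p) <->
  exists e' : nat -> A, (forall v, v \notin vs -> e' v = e v) /\ sat e' p.
Proof.
elim: vs e => [|i vs IHvs] e /=.
  by split=> [sat_e | [e' [e'_e]]]; [exists e | apply: eq_sat => k; rewrite e'_e].
split=> [[a /IHvs[e' [e'_e sat_e']]] | [e' [e'_e sat_e']]].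
  exists e'; split=> // v; rewrite inE negb_or => /andP[/negbTE vi vvs].
  by rewrite e'_e // vi.
exists (e' i); apply/IHvs; exists e'; split=> // v vvs.
by case: eqP => [-> // | /eqP vi]; apply: e'_e; rewrite inE negb_or vi.
Qed.

Lemma over_bigPAnd Q (T : Type) (s : seq T) F :
  (forall x, Defs.over Q (F x)) -> Defs.over Q (bigPAnd s F).
Proof. by move=> QF; elim: s. Qed.

Lemma over_bigPOr Q (T : Type) (s : seq T) F :
  (forall x, Defs.over Q (F x)) -> Defs.over Q (bigPOr s F).
Proof. by move=> QF; elim: s. Qed.

Lemma over_PExs Q vs p : Defs.over Q p -> Defs.over Q (PExs vs p).
Proof. by elim: vs. Qed.

(* Variables [0 .. m-1] are the free variables of an [m]-ary relation, and
   variable [var_of m a] holds the value at [a] of a unary map. *)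
Definition var_of (m : nat) (a : A) := m + index a (enum A).
Definition map_of_env (m : nat) (e : nat -> A) : umap A := [ffun a => e (var_of m a)].

Lemma separating_formula Q m g : exists p, Defs.over Q p /\ forall e,
  (map_of_env m e \in End Q -> sat e p) /\ (sat e p -> map_of_env m e = g -> g \in End Q).
Proof.
have [gQ | gNQ] := boolP (g \in End Q); first by exists PTrue; split=> // e; split.
have /existsNP[[m' rho] /not_implyP[Qrho /existsNP[r /not_implyP[r_rho gr_rho]]]] :
    ~ forall s, Q s -> preserves1 g (projT2 s) by move/in_End; apply/negP.
exists (PAtom rho (fun i => var_of m (r i))); split=> // e.
have sat_atom : [ffun i => e (var_of m (r i))] = [ffun i => map_of_env m e (r i)].
  by apply/ffunP => i; rewrite !ffunE.
rewrite /= sat_atom; split=> [/in_End/(_ _ Qrho r r_rho) // | e_rho e_g].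
by move: e_rho; rewrite e_g => /gr_rho.
Qed.

Lemma End_pp_definable Q m : exists p, Defs.over Q p /\
  forall e, sat e p <-> map_of_env m e \in End Q.
Proof.
have /choice[F F_sep] := separating_formula Q m.
exists (bigPAnd (enum (umap A)) F); split.
  by apply: over_bigPAnd => g; case: (F_sep g).
move=> e; rewrite sat_bigPAnd; split=> [F_sat | eQ g _]; last exact: (proj1 ((F_sep g).2 e)).
exact: (proj2 ((F_sep _).2 e)) (F_sat _ (mem_enum _ _)) erefl.
Qed.

Lemma preserved_pdefinable Q m (rho : relation A m) :
  (forall g, g \in End Q -> preserves1 g rho) -> pdefinable Q (existT _ m rho).
Proof.
move=> rho_pres; have [phi [Qphi phiP]] := End_pp_definable Q m.
pose vs := [seq var_of m a | a <- enum A].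
pose F (r : {ffun 'I_m -> A}) :=
  PExs vs (PAnd phi (bigPAnd (enum 'I_m) (fun j => PEq A j (var_of m (r j))))).
(* [x] lies in [rho] iff [x = h \o r] for some [r] in [rho] and some [h] in
   [End Q], whose values are held by the bound variables [vs]. *)
exists (bigPOr (enum rho) F); split.
  by apply: over_bigPOr => r; apply: over_PExs; split=> //; apply: over_bigPAnd.
have free_vs (j : 'I_m) : (j : nat) \notin vs.
  by apply/mapP => -[a _ j_a]; move: (ltn_ord j); rewrite j_a ltnNge leq_addr.
move=> e /=; rewrite sat_bigPOr; split=> [e_rho | [r]].
  exists [ffun i : 'I_m => e i]; first by rewrite mem_enum.
  pose e' v := if v \in vs then nth a0 (enum A) (v - m) else e v.
  have e'_var a : e' (var_of m a) = a.
    by rewrite /e' map_f ?mem_enum // /var_of addKn nth_index ?mem_enum.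
  apply/sat_PExs; exists e'; split=> [v /negbTE v_free | ]; first by rewrite /e' v_free.
  split; last by apply/sat_bigPAnd => j _ /=; rewrite e'_var ffunE /e' (negbTE (free_vs j)).
  apply/phiP; have -> : map_of_env m e' = idumap A by apply/ffunP => a; rewrite !ffunE e'_var.
  exact: (End_monoid Q).1.
rewrite mem_enum => r_rho /sat_PExs[e' [e'_e [/phiP e'_End /sat_bigPAnd e'_r]]].
have := rho_pres _ e'_End r r_rho; congr (_ \in rho); apply/ffunP => j.
by rewrite !ffunE -(e'_e _ (free_vs j)) (e'_r j (mem_enum _ j)).
Qed.

Lemma pdefinableE Q s :
  pdefinable Q s <-> forall g, g \in End Q -> preserves1 g (projT2 s).
Proof.
split=> [s_def g | ]; first exact: pdefinable_preserved.
by case: s => m rho; apply: preserved_pdefinable.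
Qed.

Lemma End_pdefinable Q : End (pdefinable Q) = End Q.
Proof.
apply/setP => g; apply/idP/idP => [/in_End g_def | gQ].
  by apply/in_End => s Qs; apply: g_def; apply/pdefinableE => h /in_End; apply.
by apply/in_End => s /pdefinableE; apply.
Qed.

Lemma eq_End Q1 Q2 : releq Q1 Q2 -> End Q1 = End Q2.
Proof.
move=> Q12; apply/setP => g; apply/idP/idP => /in_End gP; apply/in_End => s /Q12; exact: gP.
Qed.

Lemma pdefinable_eq Q Q' : releq (pdefinable Q) (pdefinable Q') <-> End Q = End Q'.
Proof.
split=> [/eq_End | EQ s]; first by rewrite !End_pdefinable.
by rewrite !pdefinableE EQ.
Qed.

End PositiveDefinability.
End GeneralizedQuasiorders.

Theorem corollary4p3 (A : finType) (hA : 0 < #|A|) :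
  (* (a) *)
  (forall M : {set umap A}, opeq (star (ubar M)) (Pol (gQuord_of M)))
  /\
  (* (b) *)
  (forall M : {set umap A}, is_monoid M ->
     let i := u_closed M in
     [/\ i <-> is_clone (star M),
         i <-> is_gquord (Gamma M),
         i <-> (exists Q : relset A, subrelset Q (@gQuord A) /\ M = End Q),
         i <-> (exists Q : relset A, subrelset Q (@gQuord A) /\
                  opeq (star M) (Pol Q)) &
         i <-> (exists Q : relset A, subrelset Q (@gQuord A) /\
                  M = End Q /\ opeq (star M) (Pol Q))])
  /\
  (* (c) *)
  (forall Q : relset A,
     let i := u_closed (End Q) in
     (i <-> is_clone (star (End Q))) /\
     (i <-> is_gquord (Gamma (End Q))) /\
     (i <-> (exists Q' : relset A, subrelset Q' (@gQuord A) /\ End Q = End Q')) /\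
     (i <-> (exists Q' : relset A, subrelset Q' (@gQuord A) /\
              releq (pdefinable Q) (pdefinable Q'))) /\
     (i <-> (exists Q' : relset A, subrelset Q' (@gQuord A) /\
              opeq (star (End Q)) (Pol Q'))) /\
     (i <-> (exists Q' : relset A, subrelset Q' (@gQuord A) /\
              End Q = End Q' /\ opeq (star (End Q)) (Pol Q'))) /\
     (i <-> (exists (m : nat) (rho : relation A m), is_gquord rho /\
              End Q = End (single rho))) /\
     (i <-> (exists (m : nat) (rho : relation A m), is_gquord rho /\
              releq (pdefinable Q) (pdefinable (single rho)))) /\
     (i <-> (exists (m : nat) (rho : relation A m), is_gquord rho /\
              opeq (star (End Q)) (Pol (single rho)))) /\
     (i <-> (exists (m : nat) (rho : relation A m), is_gquord rho /\
              End Q = End (single rho) /\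
              opeq (star (End Q)) (Pol (single rho))))).
Proof.
have [a0 _] := card_gt0P hA.
split; first exact: star_ubar.
split=> [M M_monoid | Q] /=.
  split; [exact: u_closed_clone | exact: u_closed_Gamma | exact: u_closed_End
         | exact: u_closed_Pol | exact: u_closed_End_Pol].
have EndQ_monoid := End_monoid Q.
have pdefE := pdefinable_eq a0 Q.
split; first exact: u_closed_clone.
split; first exact: u_closed_Gamma.
split; first exact: u_closed_End.
split.
  by rewrite (u_closed_End a0 EndQ_monoid); split=> -[Q' [Q'gQ /pdefE EQ']]; exists Q'.
split; first exact: u_closed_Pol.
split; first exact: u_closed_End_Pol.
split; first exact: u_closed_End_single.
split.
  rewrite (u_closed_End_single a0 EndQ_monoid).
  by split=> -[m [rho [rhoQ /pdefE EQrho]]]; exists m, rho.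
split; [exact: u_closed_Pol_single | exact: u_closed_End_Pol_single].
Qed.
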